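(* With $k(c)$ as defined below, $\dfrac{1}{k(c)}\log\left|r_1(c)r_2(c)\cdots r_{k(c)}(c)\right|\to\log 2$ as $c\to-2$, $c<-2$.
   Context: For real $c<-2$ let $f_c(z)=z^2+c$ and $r_n(c)=f_c^{\circ n}(0)$, so $r_1(c)=c$ and $r_{n+1}(c)=r_n(c)^2+c$. For $-3<c<-2$, $k(c)$ denotes the smallest positive integer $k$ such that $r_{k+1}(c)/r_k(c)\ge 36$. *)

From Stdlib Require Import Reals Lra.
Open Scope R_scope.

(* r n c = f_c^{n}(0), f_c(z) = z^2 + c; so r 0 c = 0 and r 1 c = c. *)
Fixpoint r (n : nat) (c : R) : R :=
  match n with
  | O => 0
  | S m => (r m c) ^ 2 + c
  end.

Fixpoint prod_r (k : nat) (c : R) : R :=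
  match k with
  | O => 1
  | S m => prod_r m c * r (S m) c
  end.

Definition is_k (c : R) (k : nat) : Prop :=
  (1 <= k)%nat /\ r (S k) c / r k c >= 36 /\
  (forall j : nat, (1 <= j)%nat -> (j < k)%nat -> r (S j) c / r j c < 36).

(* Write r_n = 2 + d_n and e = -2 - c > 0.  For n >= 2 one has
   d_(n+1) = d_n^2 + 4 d_n - e, and e <= d_2, so the excess d_n grows at least
   threefold per step, yet at most fivefold as long as it stays below 1.  Hence
   the orbit escapes (k(c) exists), but only after about log_5 (1/e) steps, so
   k(c) -> oo as c -> -2.  Meanwhile 2 <= |x| <= 2 exp (|x| / 2 - 1) for every
   factor, and the excesses sum geometrically, so 2^k <= |r_1 ... r_k| <= 2^k exp d_k;
   minimality of k(c) keeps d_k(c) bounded, and dividing the logarithm by k(c)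
   gives log 2. *)
From Stdlib Require Import Reals.
From Stdlib Require Import Lra Lia Wf_nat Classical.
Open Scope R_scope.

Lemma exists_least_nat (P : nat -> Prop) :
  (exists n, P n) -> exists n, P n /\ forall m, (m < n)%nat -> ~ P m.
Proof.
  intros HP.
  destruct (dec_inh_nat_subset_has_unique_least_element P
              (fun n => classic (P n)) HP) as [n [[Pn Hleast] _]].
  exists n; split; [exact Pn|].
  intros m Hmn Pm; specialize (Hleast m Pm); lia.
Qed.

Lemma exp_le x y : x <= y -> exp x <= exp y.
Proof.
  intros [Hxy | ->]; [left; exact (exp_increasing x y Hxy)|right; reflexivity].
Qed.

Lemma ln_le x y : 0 < x -> x <= y -> ln x <= ln y.
Proof.
  intros Hx [Hxy | ->]; [left; exact (ln_increasing x y Hx Hxy)|right; reflexivity].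
Qed.

Lemma le_twice_exp_half x : x <= 2 * exp (x / 2 - 1).
Proof. pose proof (exp_ineq1_le (x / 2 - 1)); lra. Qed.

Lemma Rdiv_ge_iff a b m : 0 < a -> (b / a >= m <-> b >= m * a).
Proof.
  intros Ha.
  assert (Hb : b = b / a * a) by (field; lra).
  split; intros H; [rewrite Hb; nra|].
  apply Rle_ge, (Rmult_le_reg_r a); [exact Ha|]; lra.
Qed.

Lemma Rdiv_lt_lt a b m : 0 < a -> b / a < m -> b < m * a.
Proof.
  intros Ha H; apply Rnot_ge_lt; intros Hge.
  apply (Rdiv_ge_iff a b m Ha) in Hge; lra.
Qed.

Lemma Rabs_mean_sub_lt k L a B e :
  0 < e -> B / e < k -> k * a <= L <= k * a + B -> Rabs (/ k * L - a) < e.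
Proof.
  intros He HBk HL.
  assert (HB : 0 <= B) by lra.
  assert (Hk : 0 < k).
  { assert (0 <= B / e) by (apply Rmult_le_pos; [lra|left; apply Rinv_0_lt_compat, He]).
    lra. }
  assert (HBe : B < e * k) by (rewrite Rmult_comm; apply Rdiv_lt_lt; lra).
  replace (/ k * L - a) with ((L - k * a) / k) by (field; lra).
  rewrite Rabs_right
    by (apply Rle_ge, Rmult_le_pos; [lra|left; apply Rinv_0_lt_compat, Hk]).
  apply Rlt_le_trans with (e * k / k); [|right; field; lra].
  apply Rmult_lt_compat_r; [apply Rinv_0_lt_compat|]; lra.
Qed.

Section Orbit.

Variable c : R.
Hypothesis c_lt : c < -2.

Lemma r_succ n : r (S n) c = r n c ^ 2 + c.
Proof. reflexivity. Qed.

Lemma r_one : r 1 c = c.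
Proof. simpl; ring. Qed.

Lemma r_two : r 2 c = c ^ 2 + c.
Proof. simpl; ring. Qed.

Lemma escape_ge n : (2 <= n)%nat -> -2 - c <= r n c - 2.
Proof.
  induction 1 as [|n _ IH].
  - rewrite r_two; nra.
  - rewrite r_succ; nra.
Qed.

Lemma r_ge_two n : (2 <= n)%nat -> 2 <= r n c.
Proof. intros Hn; pose proof (escape_ge n Hn); lra. Qed.

Lemma Rabs_r_ge_two n : (1 <= n)%nat -> 2 <= Rabs (r n c).
Proof.
  intros Hn; destruct (Nat.eq_dec n 1) as [->|Hn1].
  - rewrite r_one, Rabs_left; lra.
  - rewrite Rabs_right; [apply r_ge_two; lia|].
    pose proof (r_ge_two n ltac:(lia)); lra.
Qed.

Lemma escape_triple n : (2 <= n)%nat -> 3 * (r n c - 2) <= r (S n) c - 2.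
Proof. intros Hn; pose proof (escape_ge n Hn); rewrite r_succ; nra. Qed.

Lemma escape_linear n : INR n * (-2 - c) <= r (2 + n) c - 2.
Proof.
  induction n as [|n IH].
  - change (r (2 + 0) c) with (r 2 c); simpl INR.
    pose proof (escape_ge 2 (le_n 2)); lra.
  - rewrite S_INR.
    pose proof (escape_triple (2 + n) ltac:(lia)).
    pose proof (escape_ge (2 + n) ltac:(lia)).
    change (r (2 + S n) c) with (r (S (2 + n)) c); lra.
Qed.

Lemma escape_geometric n :
  4 * 5 ^ n * (-2 - c) <= 1 -> r (2 + n) c - 2 <= 4 * 5 ^ n * (-2 - c).
Proof.
  induction n as [|n IH]; intros Hsmall.
  - rewrite pow_O in *; change (2 + 0)%nat with 2%nat; rewrite r_two; nra.
  - rewrite <- tech_pow_Rmult in *.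
    assert (H5n : 0 < 5 ^ n) by (apply pow_lt; lra).
    assert (Hd : r (2 + n) c - 2 <= 4 * 5 ^ n * (-2 - c)) by (apply IH; nra).
    pose proof (escape_ge (2 + n) ltac:(lia)).
    change (r (2 + S n) c) with (r (S (2 + n)) c); rewrite r_succ.
    set (d := r (2 + n) c - 2) in *.
    replace (r (2 + n) c) with (2 + d) by (unfold d; ring).
    nra.
Qed.

Lemma prod_r_abs_ge k : 2 ^ k <= Rabs (prod_r k c).
Proof.
  induction k as [|k IH].
  - simpl; rewrite Rabs_R1; lra.
  - change (prod_r (S k) c) with (prod_r k c * r (S k) c).
    rewrite <- tech_pow_Rmult, Rabs_mult, Rmult_comm.
    apply Rmult_le_compat; [apply pow_le; lra|lra|exact IH|].
    apply Rabs_r_ge_two; lia.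
Qed.

Lemma prod_r_abs_le k :
  (2 <= k)%nat -> Rabs (prod_r k c) <= 2 ^ k * exp (r k c - 2).
Proof.
  induction 1 as [|k Hk IH].
  - change (prod_r 2 c) with (1 * r 1 c * r 2 c).
    rewrite !Rabs_mult, Rabs_R1, Rmult_1_l, r_one.
    pose proof (escape_ge 2 (le_n 2)) as He.
    rewrite (Rabs_right (r 2 c)) by (pose proof (r_ge_two 2 (le_n 2)); lra).
    rewrite Rabs_left by lra.
    pose proof (le_twice_exp_half (- c)) as Hc.
    pose proof (le_twice_exp_half (r 2 c)) as Hr.
    assert (Hexp : exp (- c / 2 - 1) * exp (r 2 c / 2 - 1) <= exp (r 2 c - 2))
      by (rewrite <- exp_plus; apply exp_le; lra).
    apply Rle_trans with (2 * exp (- c / 2 - 1) * (2 * exp (r 2 c / 2 - 1)));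
      [apply Rmult_le_compat; lra|].
    simpl pow; nra.
  - change (prod_r (S k) c) with (prod_r k c * r (S k) c).
    rewrite Rabs_mult.
    pose proof (r_ge_two (S k) ltac:(lia)) as Hr2.
    pose proof (escape_triple k Hk); pose proof (escape_ge k Hk).
    rewrite (Rabs_right (r (S k) c)) by lra.
    pose proof (le_twice_exp_half (r (S k) c)) as Hr.
    assert (Hexp : exp (r k c - 2) * exp (r (S k) c / 2 - 1) <= exp (r (S k) c - 2))
      by (rewrite <- exp_plus; apply exp_le; lra).
    apply Rle_trans with (2 ^ k * exp (r k c - 2) * (2 * exp (r (S k) c / 2 - 1)));
      [apply Rmult_le_compat; [apply Rabs_pos|lra|exact IH|exact Hr]|].
    rewrite <- tech_pow_Rmult.
    pose proof (pow_lt 2 k ltac:(lra)); nra.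
Qed.

Lemma ln_prod_r_bounds k : (2 <= k)%nat ->
  INR k * ln 2 <= ln (Rabs (prod_r k c)) <= INR k * ln 2 + (r k c - 2).
Proof.
  intros Hk.
  pose proof (pow_lt 2 k ltac:(lra)).
  pose proof (prod_r_abs_ge k); pose proof (prod_r_abs_le k Hk).
  rewrite <- ln_pow by lra; split.
  - apply ln_le; lra.
  - rewrite <- (ln_exp (r k c - 2)), <- ln_mult by (try apply exp_pos; lra).
    apply ln_le; lra.
Qed.

Lemma is_k_ge_two k : is_k c k -> (2 <= k)%nat.
Proof.
  intros [Hk [Hratio _]].
  destruct k as [|[|k]]; [lia| |lia].
  rewrite r_one, r_two in Hratio.
  replace ((c ^ 2 + c) / c) with (c + 1) in Hratio by (field; lra); lra.
Qed.

Lemma ratio_ge_36_r_ge n : (2 <= n)%nat -> r (S n) c / r n c >= 36 -> 36 <= r n c.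
Proof.
  intros Hn Hratio; pose proof (r_ge_two n Hn).
  apply (Rdiv_ge_iff (r n c)) in Hratio; [|lra].
  rewrite r_succ in Hratio.
  apply Rnot_lt_le; intros Hr.
  assert (0 < r n c * (36 - r n c)) by (apply Rmult_lt_0_compat; lra).
  nra.
Qed.

Lemma r_ge_ratio_ge_36 n : (2 <= n)%nat -> 36 - c <= r n c -> r (S n) c / r n c >= 36.
Proof.
  intros Hn Hr; pose proof (r_ge_two n Hn).
  apply Rdiv_ge_iff; [lra|].
  rewrite r_succ; nra.
Qed.

Lemma is_k_exists : exists k, is_k c k.
Proof.
  set (P j := (1 <= j)%nat /\ r (S j) c / r j c >= 36).
  assert (HP : exists j, P j).
  { destruct (INR_unbounded ((34 - c) / (-2 - c))) as [n Hn].
    exists (2 + n)%nat; split; [lia|].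
    apply r_ge_ratio_ge_36; [lia|].
    pose proof (escape_linear n).
    assert (34 - c < INR n * (-2 - c)).
    { apply Rdiv_lt_lt; [lra|]; lra. }
    lra. }
  destruct (exists_least_nat P HP) as [k [[Hk Hratio] Hleast]].
  exists k; repeat split; [exact Hk|exact Hratio|].
  intros j Hj Hjk; apply Rnot_ge_lt; intros Hge.
  exact (Hleast j Hjk (conj Hj Hge)).
Qed.

Lemma is_k_gt n k : 4 * 5 ^ n * (-2 - c) <= 1 -> is_k c k -> (2 + n < k)%nat.
Proof.
  intros Hsmall Hk.
  pose proof (is_k_ge_two k Hk) as Hk2.
  destruct (Compare_dec.le_lt_dec k (2 + n)) as [Hkn|]; [exfalso|assumption].
  destruct Hk as [_ [Hratio _]].
  pose proof (ratio_ge_36_r_ge k Hk2 Hratio).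
  replace k with (2 + (k - 2))%nat in * by lia.
  assert (Hpow : 5 ^ (k - 2) <= 5 ^ n) by (apply Rle_pow; [lra|lia]).
  assert (Hsmall' : 4 * 5 ^ (k - 2) * (-2 - c) <= 1) by nra.
  pose proof (escape_geometric (k - 2) Hsmall'); lra.
Qed.

Lemma r_lt_of_ratio_lt n :
  -3 < c -> (2 <= n)%nat -> r (S n) c / r n c < 36 -> r (S n) c < 1332.
Proof.
  intros Hc Hn Hratio; pose proof (r_ge_two n Hn).
  apply (Rdiv_lt_lt (r n c)) in Hratio; [|lra].
  assert (r n c < 37) by (rewrite r_succ in Hratio; nra).
  lra.
Qed.

End Orbit.

Theorem lemma1 :
  forall eps : R, eps > 0 ->
  exists delta : R, delta > 0 /\
    forall c : R, -3 < c -> -2 - delta < c -> c < -2 ->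
      (exists k : nat, is_k c k) /\
      (forall k : nat, is_k c k ->
         Rabs (/ INR k * ln (Rabs (prod_r k c)) - ln 2) < eps).
Proof.
  intros eps Heps.
  destruct (INR_unbounded (1332 / eps)) as [n Hn].
  assert (H5n : 0 < 4 * 5 ^ n) by (pose proof (pow_lt 5 n ltac:(lra)); lra).
  exists (/ (4 * 5 ^ n)); split; [apply Rlt_gt, Rinv_0_lt_compat, H5n|].
  intros c Hc3 Hdelta Hc; split; [exact (is_k_exists c Hc)|].
  intros k Hk.
  assert (Hsmall : 4 * 5 ^ n * (-2 - c) <= 1).
  { replace 1 with (4 * 5 ^ n * / (4 * 5 ^ n)) by (field; lra).
    apply Rmult_le_compat_l; lra. }
  pose proof (is_k_gt c Hc n k Hsmall Hk) as Hnk.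
  destruct k as [|k]; [lia|].
  assert (Hrk : r (S k) c < 1332).
  { apply (r_lt_of_ratio_lt c Hc k Hc3); [lia|].
    destruct Hk as [_ [_ Hleast]]; apply Hleast; lia. }
  pose proof (ln_prod_r_bounds c Hc (S k) ltac:(lia)).
  apply Rabs_mean_sub_lt with (B := 1332); [lra| |lra].
  pose proof (lt_INR n (S k) ltac:(lia)); lra.
Qed.
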